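(* Let $s,t$ be processes, $\mathcal{Z}_s\in\mathrm{res}(s)$ with initial state $z_s$ and $\mathcal{Z}_t\in\mathrm{res}(t)$ with initial state $z_t$. Then $\Psi_{\mathcal{Z}_s}\equiv^\dagger\Psi_{\mathcal{Z}_t}$ if and only if $\Pr(\mathcal{C}^{\mathrm{w}}(z_s,\alpha))=\Pr(\mathcal{C}^{\mathrm{w}}(z_t,\alpha))$ for all $\alpha\in A^\star$.
   Context: PTS $(\mathcal{S},A_\tau,\to)$ with $A_\tau=A\cup\{\tau\}$, $\tau$ the silent action, finitely supported distributions; processes image-finite and finite. Computations $c=s_0\xrightarrow{a_1}\cdots\xrightarrow{a_n}s_n$ via transitions $s_{i-1}\xrightarrow{a_i}\pi_i$, $s_i\in\mathrm{supp}(\pi_i)$; $\Pr(c)=\prod\pi_i(s_i)$ (empty: 1); $\mathrm{tr}(c)=a_1\cdots a_n\in A_\tau^\star$; maximal = not a proper prefix of another computation from the same process; $\mathcal{C}_{\max}(z,\alpha)=\{c\in\mathcal{C}_{\max}(z):\mathrm{tr}(c)=\alpha\}$; $\Pr$ of a set is the sum. A resolution of $s$ is a PTS $\mathcal{Z}=(Z,A_\tau,\to_{\mathcal{Z}})$ with $\mathrm{corr}\colon Z\to\mathcal{S}$ and initial state $z_s$, $\mathrm{corr}(z_s)=s$, such that $z_s$ is in no target support, every other state is in the support of a target of a transition from a different state, every $z\xrightarrow{a}_{\mathcal{Z}}\pi$ is matched by $\mathrm{corr}(z)\xrightarrow{a}\pi'$ with $\pi(z')=\pi'(\mathrm{corr}(z'))$,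 and each state has at most one outgoing transition. Traces are equivalent, $\alpha\equiv\beta$, iff they coincide after deleting all $\tau$'s. For $\alpha\in A^\star$, $\mathcal{C}^{\mathrm{w}}(z,\alpha)$ is the set of computations $c$ from $z$ with $\mathrm{tr}(c)\equiv\alpha$ that are not proper prefixes of another computation $c'$ from $z$ with $\mathrm{tr}(c')\equiv\alpha$. Trace formulae $\Phi::=\top\mid\langle a\rangle\Phi$, $a\in A_\tau$; tracing formula $\Phi_\varepsilon=\top$, $\Phi_{a\alpha}=\langle a\rangle\Phi_\alpha$; $\Phi_\alpha\equiv\Phi_\beta$ iff $\alpha\equiv\beta$. Trace distribution formulae $\bigoplus_{i\in I}r_i\Phi_i$ ($I$ finite nonempty, $\Phi_i$ pairwise distinct, $r_i\in(0,1]$, $\sum r_i=1$) are viewed as distributions on trace formulae; $\Psi_1\equiv^\dagger\Psi_2$ iff they assign the same total probability to every $\equiv$-class. Mimicking formula: $\Psi_{\mathcal{Z}}=\bigoplus_{\alpha\in\mathrm{tr}(\mathcal{C}_{\max}(z))}\Pr(\mathcal{C}_{\max}(z,\alpha))\Phi_\alpha$. *)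

From Stdlib Require Import Reals List Classical ClassicalEpsilon.
Import ListNotations.
Open Scope R_scope.
Set Implicit Arguments.

Definition Atau (A : Type) := option A.
Definition tau {A : Type} : Atau A := None.

Definition lsum {T : Type} (f : T -> R) (l : list T) : R :=
  fold_right (fun x acc => f x + acc) 0 l.

(** Sum of f over a (finite) set P; the value is the sum over any duplicate-free
    enumeration of P.  (If P is not finite, the value is 0 by convention;
    all sets used in the theorem are finite under its hypotheses.) *)
Definition fsum {T : Type} (P : T -> Prop) (f : T -> R) : R :=
  match excluded_middle_informative
          (exists l : list T, NoDup l /\ forall x, P x <-> In x l) with
  | left H => lsum f (proj1_sig (constructive_indefinite_description _ H))
  | right _ => 0
  end.

Definition is_dist {X : Type} (pi : X -> R) : Prop :=
  (forall x, 0 <= pi x) /\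
  exists l : list X, NoDup l /\ (forall x, pi x <> 0 -> In x l) /\ lsum pi l = 1.

Definition PTS_wf {A S : Type} (trans : S -> Atau A -> (S -> R) -> Prop) : Prop :=
  forall s a pi, trans s a pi -> is_dist pi.

Inductive reach {A S : Type} (trans : S -> Atau A -> (S -> R) -> Prop) : S -> S -> Prop :=
| reach_refl s : reach trans s s
| reach_step s a pi s' s'' :
    trans s a pi -> 0 < pi s' -> reach trans s' s'' -> reach trans s s''.

Definition image_finite_at {A S : Type} (trans : S -> Atau A -> (S -> R) -> Prop) (s : S) : Prop :=
  exists l : list (Atau A * (S -> R)), forall a pi, trans s a pi <-> In (a, pi) l.

Definition image_finite_proc {A S : Type} (trans : S -> Atau A -> (S -> R) -> Prop) (s : S) : Prop :=
  forall s', reach trans s s' -> image_finite_at trans s'.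

Definition finite_proc {A S : Type} (trans : S -> Atau A -> (S -> R) -> Prop) (s : S) : Prop :=
  ~ exists (f : nat -> S) (g : nat -> Atau A) (h : nat -> (S -> R)),
      f O = s /\ forall n, trans (f n) (g n) (h n) /\ 0 < h n (f (Datatypes.S n)).

(** A resolution is a PTS in which each state has at most one
    outgoing transition; we represent its transition relation by a partial
    function [rtr : Z -> option (Atau A * (Z -> R))]:  z -a->_Z pi  iff
    rtr z = Some (a, pi). *)
Definition res_trans {A Z : Type} (rtr : Z -> option (Atau A * (Z -> R)))
  : Z -> Atau A -> (Z -> R) -> Prop :=
  fun z a pi => rtr z = Some (a, pi).

Definition is_resolution {A S Z : Type} (trans : S -> Atau A -> (S -> R) -> Prop) (s : S)
  (rtr : Z -> option (Atau A * (Z -> R))) (corr : Z -> S) (z0 : Z) : Prop :=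
  PTS_wf (res_trans rtr) /\
  corr z0 = s /\
  (forall z a pi, res_trans rtr z a pi -> ~ 0 < pi z0) /\
  (forall z, z <> z0 ->
     exists z' a pi, z' <> z /\ res_trans rtr z' a pi /\ 0 < pi z) /\
  (forall z a pi, res_trans rtr z a pi ->
     exists pi', trans (corr z) a pi' /\ forall z', pi z' = pi' (corr z')).

(** Computations from z in a resolution: the sequence of pairs (a_i, z_i)
    of  z = z_0 -a_1-> z_1 ... -a_n-> z_n. *)
Fixpoint is_comp {A Z : Type} (rtr : Z -> option (Atau A * (Z -> R)))
  (z : Z) (c : list (Atau A * Z)) : Prop :=
  match c with
  | [] => True
  | (a, z') :: c' =>
      exists pi, rtr z = Some (a, pi) /\ 0 < pi z' /\ is_comp rtr z' c'
  end.

Fixpoint comp_pr {A Z : Type} (rtr : Z -> option (Atau A * (Z -> R)))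
  (z : Z) (c : list (Atau A * Z)) : R :=
  match c with
  | [] => 1
  | (_, z') :: c' =>
      match rtr z with
      | Some (_, pi) => pi z' * comp_pr rtr z' c'
      | None => 0
      end
  end.

Definition ctrace {A Z : Type} (c : list (Atau A * Z)) : list (Atau A) := map fst c.

Definition proper_prefix {T : Type} (c c' : list T) : Prop :=
  exists d, d <> [] /\ c' = c ++ d.

Definition is_max_comp {A Z : Type} (rtr : Z -> option (Atau A * (Z -> R)))
  (z : Z) (c : list (Atau A * Z)) : Prop :=
  is_comp rtr z c /\ ~ exists c', is_comp rtr z c' /\ proper_prefix c c'.

Definition PrSet {A Z : Type} (rtr : Z -> option (Atau A * (Z -> R))) (z : Z)
  (P : list (Atau A * Z) -> Prop) : R :=
  fsum P (comp_pr rtr z).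

Fixpoint erase {A : Type} (l : list (Atau A)) : list A :=
  match l with
  | [] => []
  | None :: l' => erase l'
  | Some a :: l' => a :: erase l'
  end.

Definition trace_equiv {A : Type} (al be : list (Atau A)) : Prop := erase al = erase be.

Definition Cw {A Z : Type} (rtr : Z -> option (Atau A * (Z -> R))) (z : Z) (alpha : list A)
  : list (Atau A * Z) -> Prop :=
  fun c => is_comp rtr z c /\ erase (ctrace c) = alpha /\
    ~ exists c', is_comp rtr z c' /\ erase (ctrace c') = alpha /\ proper_prefix c c'.

Inductive tform (A : Type) : Type :=
| TTop : tform A
| TDia : Atau A -> tform A -> tform A.
Arguments TTop {A}.

Fixpoint tracing {A : Type} (al : list (Atau A)) : tform A :=
  match al with
  | [] => TTop
  | a :: al' => TDia a (tracing al')
  end.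

Definition tf_equiv {A : Type} (f g : tform A) : Prop :=
  exists al be, f = tracing al /\ g = tracing be /\ trace_equiv al be.

(** Trace distribution formulae are viewed as (finitely supported)
    distributions on trace formulae: functions tform A -> R. *)
Definition class_pr {A : Type} (Psi : tform A -> R) (f : tform A) : R :=
  fsum (fun g => tf_equiv g f /\ Psi g <> 0) Psi.

Definition tdf_equiv {A : Type} (Psi1 Psi2 : tform A -> R) : Prop :=
  forall f, class_pr Psi1 f = class_pr Psi2 f.

(** Mimicking formula Psi_Z = (+)_{alpha in tr(C_max(z))} Pr(C_max(z,alpha)) Phi_alpha,
    as a distribution on trace formulae: the weight of Phi_alpha is
    Pr(C_max(z, alpha)) (which is 0 iff alpha is not in tr(C_max(z))). *)
Definition mimic {A Z : Type} (rtr : Z -> option (Atau A * (Z -> R))) (z : Z)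
  : tform A -> R :=
  fun f => PrSet rtr z (fun c => is_max_comp rtr z c /\ tracing (ctrace c) = f).

(* Write W(z, al) for Pr(C^w(z, al)) and Q(z, al) for the probability of the
   maximal computations from z whose visible trace is al; Q(z, al) is the weight
   the mimicking formula of z gives to the class of Phi_al.  In a resolution every
   state has at most one transition, so a computation of C^w(z, al) is either
   maximal or is continued, up to and including its next visible action b, into
   computations of C^w(z, al b).  Hence W(al) = Q(al) + sum_b W(al b), b ranging
   over the finitely many visible actions of the finite resolution.  As W vanishes
   beyond the depth of the resolution, this determines W from Q by downward
   induction on the length of al, and Q from W directly. *)

From Stdlib Require Import Reals List.
From Stdlib Require Import Lra Lia Classical ClassicalEpsilon Permutation FinFun.
Import ListNotations.
Open Scope R_scope.

Definition covered {T : Type} (P : T -> Prop) : Prop := exists l : list T, forall x, P x -> In x l.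

Definition indicator {T : Type} (P : T -> Prop) (f : T -> R) (x : T) : R :=
  if excluded_middle_informative (P x) then f x else 0.

Lemma lsum_app {T : Type} (f : T -> R) l1 l2 : lsum f (l1 ++ l2) = lsum f l1 + lsum f l2.
Proof. induction l1; simpl; lra. Qed.

Lemma lsum_perm {T : Type} (f : T -> R) l1 l2 : Permutation l1 l2 -> lsum f l1 = lsum f l2.
Proof. induction 1; simpl; lra. Qed.

Lemma lsum_ext {T : Type} (f g : T -> R) l : (forall x, In x l -> f x = g x) -> lsum f l = lsum g l.
Proof. induction l; simpl; intros H; auto. rewrite H, IHl; auto. Qed.

Lemma lsum_plus {T : Type} (f g : T -> R) l : lsum (fun x => f x + g x) l = lsum f l + lsum g l.
Proof. induction l; simpl; lra. Qed.

Lemma lsum_scal {T : Type} (f : T -> R) k l : lsum (fun x => k * f x) l = k * lsum f l.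
Proof. induction l; simpl; lra. Qed.

Lemma lsum_zero {T : Type} (l : list T) : lsum (fun _ => 0) l = 0.
Proof. induction l; simpl; lra. Qed.

Lemma lsum_nonneg {T : Type} (f : T -> R) l : (forall x, In x l -> 0 <= f x) -> 0 <= lsum f l.
Proof.
  induction l; simpl; intros H; [lra|].
  assert (0 <= f a) by auto. assert (0 <= lsum f l) by auto. lra.
Qed.

Lemma lsum_ge {T : Type} (f : T -> R) l x :
  (forall y, In y l -> 0 <= f y) -> In x l -> f x <= lsum f l.
Proof.
  induction l; simpl; intros H Hx; [tauto|]. destruct Hx as [<-|Hx].
  - assert (0 <= lsum f l) by (apply lsum_nonneg; auto). lra.
  - assert (f x <= lsum f l) by auto. assert (0 <= f a) by auto. lra.
Qed.

Lemma lsum_exch {T U : Type} (F : T -> U -> R) l1 l2 :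
  lsum (fun x => lsum (F x) l2) l1 = lsum (fun y => lsum (fun x => F x y) l1) l2.
Proof.
  induction l1 as [|x l1 IH].
  - exact (eq_sym (lsum_zero l2)).
  - change (lsum (F x) l2 + lsum (fun x => lsum (F x) l2) l1 =
            lsum (fun y => F x y + lsum (fun x => F x y) l1) l2).
    rewrite IH, lsum_plus. reflexivity.
Qed.

Lemma lsum_delta {T : Type} (l : list T) (y : T) (k : R) : NoDup l ->
  lsum (fun x => if excluded_middle_informative (y = x) then k else 0) l =
  if excluded_middle_informative (In y l) then k else 0.
Proof.
  induction 1 as [|x l Hx _ IH]; simpl.
  - destruct (excluded_middle_informative False); tauto || lra.
  - rewrite IH.
    destruct (excluded_middle_informative (y = x)), (excluded_middle_informative (In y l)),
      (excluded_middle_informative (x = y \/ In y l)); subst; try lra; intuition congruence.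
Qed.

Lemma covered_NoDup {T : Type} (P : T -> Prop) :
  covered P -> exists l, NoDup l /\ forall x, P x <-> In x l.
Proof.
  intros [l Hl]. revert P Hl. induction l as [|x l IH]; intros P Hl.
  - exists []. split; [constructor|]. intros y; split; [apply Hl | simpl; tauto].
  - destruct (IH (fun y => P y /\ y <> x)) as [l' [Hn Hl']].
    { intros y [Hy Hne]. destruct (Hl y Hy); [congruence | auto]. }
    destruct (classic (P x)) as [Px|nPx].
    + exists (x :: l'). split.
      * constructor; auto. rewrite <- Hl'. tauto.
      * intros y. simpl. rewrite <- Hl'. split.
        -- intros Py. destruct (classic (x = y)) as [|Hne]; [left | right]; auto.
        -- intros [<-|[Py _]]; auto.
    + exists l'. split; auto. intros y. rewrite <- Hl'. split; [|tauto].
      intros Py; split; auto. intros ->; tauto.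
Qed.

Lemma covered_sub {T : Type} (P Q : T -> Prop) : covered Q -> (forall x, P x -> Q x) -> covered P.
Proof. intros [l Hl] H. exists l; auto. Qed.

Lemma fsum_lsum {T : Type} P (f : T -> R) l :
  NoDup l -> (forall x, P x <-> In x l) -> fsum P f = lsum f l.
Proof.
  intros Hn Hl. unfold fsum. destruct (excluded_middle_informative _) as [H|H].
  - destruct (constructive_indefinite_description _ H) as [l' [Hn' Hl']]; simpl.
    apply lsum_perm, NoDup_Permutation; auto. intro x. rewrite <- Hl', Hl. tauto.
  - exfalso; eauto.
Qed.

Lemma fsum_ext {T : Type} P Q (f g : T -> R) :
  (forall x, P x <-> Q x) -> (forall x, P x -> f x = g x) -> fsum P f = fsum Q g.
Proof.
  intros HPQ Hfg. unfold fsum.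
  destruct (excluded_middle_informative (exists l, NoDup l /\ forall x, P x <-> In x l)) as [HP|HP],
    (excluded_middle_informative (exists l, NoDup l /\ forall x, Q x <-> In x l)) as [HQ|HQ].
  - destruct (constructive_indefinite_description _ HP) as [l [Hn Hl]],
      (constructive_indefinite_description _ HQ) as [l' [Hn' Hl']]; simpl.
    rewrite (lsum_ext f g l) by (intros x Hx; apply Hfg, Hl, Hx).
    apply lsum_perm, NoDup_Permutation; auto. intro x. rewrite <- Hl, <- Hl'. auto.
  - exfalso. apply HQ. destruct HP as [l [Hn Hl]]. exists l. split; auto.
    intro x. rewrite <- HPQ. auto.
  - exfalso. apply HP. destruct HQ as [l [Hn Hl]]. exists l. split; auto.
    intro x. rewrite HPQ. auto.
  - reflexivity.
Qed.

Lemma fsum_scal {T : Type} P (f : T -> R) k : fsum P (fun x => k * f x) = k * fsum P f.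
Proof. unfold fsum. destruct (excluded_middle_informative _); [apply lsum_scal | lra]. Qed.

Lemma fsum_empty {T : Type} P (f : T -> R) : (forall x, ~ P x) -> fsum P f = 0.
Proof.
  intros H. rewrite (fsum_lsum P f []); [reflexivity | constructor |].
  intros x; simpl; split; [apply H | tauto].
Qed.

Lemma fsum_single {T : Type} P (f : T -> R) y : (forall x, P x <-> x = y) -> fsum P f = f y.
Proof.
  intros H. rewrite (fsum_lsum P f [y]); simpl; [lra | repeat constructor; simpl; tauto |].
  intros x; rewrite H; simpl; split; [auto | intros [->|[]]; auto].
Qed.

Lemma fsum_union {T : Type} P Q (f : T -> R) :
  covered P -> covered Q -> (forall x, P x -> Q x -> False) ->
  fsum (fun x => P x \/ Q x) f = fsum P f + fsum Q f.
Proof.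
  intros cP cQ Hd.
  destruct (covered_NoDup P cP) as [l1 [N1 H1]], (covered_NoDup Q cQ) as [l2 [N2 H2]].
  rewrite (fsum_lsum P f l1), (fsum_lsum Q f l2), (fsum_lsum _ f (l1 ++ l2)); auto.
  - apply lsum_app.
  - apply NoDup_app; auto. intros a Ha Hb. apply (Hd a); [apply H1 | apply H2]; auto.
  - intros x. rewrite in_app_iff, H1, H2. tauto.
Qed.

Lemma fsum_ge {T : Type} P (f : T -> R) x :
  covered P -> (forall y, P y -> 0 <= f y) -> P x -> f x <= fsum P f.
Proof.
  intros cP Hp Px. destruct (covered_NoDup P cP) as [l [N H]].
  rewrite (fsum_lsum P f l); auto. apply lsum_ge; [intros y Hy; apply Hp, H | apply H]; auto.
Qed.

Lemma fsum_indicator {T : Type} P (f : T -> R) l :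
  NoDup l -> (forall x, P x -> In x l) -> fsum P f = lsum (indicator P f) l.
Proof.
  revert P. induction l as [|x l IH]; intros P Hn Hl.
  - apply fsum_empty. intros y Py. apply (Hl y Py).
  - inversion Hn as [|? ? Hx Hn']; subst. simpl.
    assert (Hrest : forall y, P y /\ y <> x -> In y l).
    { intros y [Py Hne]. destruct (Hl y Py); [congruence | auto]. }
    rewrite (lsum_ext _ (indicator (fun y => P y /\ y <> x) f) l).
    2:{ intros y Hy. unfold indicator.
        destruct (excluded_middle_informative (P y)),
          (excluded_middle_informative (P y /\ y <> x)); try tauto.
        exfalso. apply n. split; auto. intros ->; tauto. }
    rewrite <- IH by auto.
    unfold indicator. destruct (excluded_middle_informative (P x)) as [Px|nPx].
    + rewrite <- (fsum_single (fun y => y = x) f x), <- fsum_union by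
        (tauto || (exists [x]; intros y ->; simpl; auto) || (exists l; auto)
         || (intros y -> [_ H]; tauto)).
      apply fsum_ext; auto. intros y. split.
      * intros Py. destruct (classic (y = x)); tauto.
      * intros [->|[]]; auto.
    + rewrite Rplus_0_l. apply fsum_ext; auto. intros y; split; [|tauto].
      intros Py; split; auto. intros ->; tauto.
Qed.

Lemma fsum_partition {T Y : Type} (M : T -> Prop) (h : T -> Y) (Pg : Y -> Prop) (f : T -> R) :
  covered M -> covered Pg ->
  fsum Pg (fun g => fsum (fun c => M c /\ h c = g) f) = fsum (fun c => M c /\ Pg (h c)) f.
Proof.
  intros cM cP.
  destruct (covered_NoDup M cM) as [lM [NM HM]], (covered_NoDup Pg cP) as [lP [NP HP]].
  rewrite (fsum_lsum Pg _ lP) by auto.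
  rewrite (fsum_indicator _ f lM) by (assumption || (intros c [Mc _]; apply HM, Mc)).
  transitivity (lsum (fun g =>
    lsum (fun c => if excluded_middle_informative (h c = g) then f c else 0) lM) lP).
  { apply lsum_ext. intros g Hg.
    rewrite (fsum_indicator _ f lM) by (assumption || (intros c [Mc _]; apply HM, Mc)).
    apply lsum_ext. intros c Hc. unfold indicator.
    destruct (excluded_middle_informative (M c /\ h c = g)),
      (excluded_middle_informative (h c = g));
      try tauto.
    exfalso; apply n; split; auto; apply HM; auto. }
  rewrite lsum_exch. apply lsum_ext. intros c Hc. rewrite lsum_delta by auto. unfold indicator.
  destruct (excluded_middle_informative (In (h c) lP)),
    (excluded_middle_informative (M c /\ Pg (h c))); auto.
  - exfalso; apply n; split; [apply HM | apply HP]; auto.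
  - exfalso; apply n; apply HP; tauto.
Qed.

Lemma covered_union_list {T U : Type} (L : list U) (Q : U -> T -> Prop) :
  (forall u, In u L -> covered (Q u)) -> covered (fun x => exists u, In u L /\ Q u x).
Proof.
  induction L as [|u L IH]; intros H.
  - exists []. intros x [u [[] _]].
  - destruct IH as [l Hl]; [intros; apply H; simpl; auto|].
    destruct (H u (or_introl eq_refl)) as [l0 H0].
    exists (l0 ++ l). intros x [u' [[<-|Hu'] Hx]]; apply in_or_app; [left | right]; eauto.
Qed.

Lemma fsum_image {X Y : Type} (P : X -> Prop) (h : X -> Y) (g : Y -> R) :
  Injective h -> covered P ->
  fsum (fun y => exists x, P x /\ y = h x) g = fsum P (fun x => g (h x)).
Proof.
  intros Hi cP. destruct (covered_NoDup P cP) as [l [N H]].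
  rewrite (fsum_lsum P _ l), (fsum_lsum _ g (map h l)); auto.
  - clear. induction l; simpl; auto. rewrite IHl; auto.
  - apply Injective_map_NoDup; auto.
  - intros y. rewrite in_map_iff. split.
    + intros [x [Px ->]]. exists x; split; auto. apply H; auto.
    + intros [x [<- Hx]]. exists x; split; auto. apply H; auto.
Qed.

Lemma fsum_cons_union {T X : Type} (a : T) (L : list X) (Pz : X -> list (T * X) -> Prop) f :
  NoDup L -> (forall x, In x L -> covered (Pz x)) ->
  fsum (fun c => exists x, In x L /\ exists c', Pz x c' /\ c = (a, x) :: c') f =
  lsum (fun x => fsum (Pz x) (fun c' => f ((a, x) :: c'))) L.
Proof.
  induction 1 as [|x L Hx N IH]; intros covP; simpl.
  - apply fsum_empty. intros c [x [[] _]].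
  - rewrite <- IH by (intros; apply covP; simpl; auto).
    rewrite <- (fsum_image (Pz x) (cons (a, x))).
    + rewrite <- fsum_union.
      * apply fsum_ext; [|reflexivity]. intros c. split.
        -- intros (x' & [<-|Hx'] & Hc); [left | right; exists x']; auto.
        -- intros [Hc|(x' & Hx' & Hc)]; [exists x | exists x']; auto.
      * destruct (covP x (or_introl eq_refl)) as [l0 H0]. exists (map (cons (a, x)) l0).
        intros c [c' [Hp ->]]. apply in_map; auto.
      * apply covered_union_list. intros x' Hx'. destruct (covP x' (or_intror Hx')) as [l0 H0].
        exists (map (cons (a, x')) l0). intros c [c' [Hp ->]]. apply in_map; auto.
      * intros c [c' [_ ->]] [x' [Hx' [c'' [_ Ec]]]]. injection Ec as -> _. tauto.
    + intros c1 c2 Ec. injection Ec; auto.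
    + apply covP; simpl; auto.
Qed.

Definition support {X : Type} (pi : X -> R) (L : list X) : Prop :=
  NoDup L /\ forall x, In x L <-> 0 < pi x.

Lemma support_exists {X : Type} (pi : X -> R) : is_dist pi -> exists L, support pi L.
Proof.
  intros [Hnn [l [_ [Hl _]]]].
  destruct (covered_NoDup (fun x => 0 < pi x)) as [L [N HL]].
  { exists l. intros x Hx. apply Hl. lra. }
  exists L. split; auto. intros x; rewrite HL; tauto.
Qed.

Lemma support_sum {X : Type} (pi : X -> R) L : is_dist pi -> support pi L -> lsum pi L = 1.
Proof.
  intros [Hnn [l [Nl [Hl Hs]]]] [N HL].
  rewrite <- (fsum_lsum (fun x => 0 < pi x) pi L) by (auto; intros x; rewrite HL; tauto).
  rewrite (fsum_indicator _ pi l) by (auto; intros x Hx; apply Hl; lra).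
  rewrite <- Hs. apply lsum_ext. intros x _. unfold indicator.
  destruct (excluded_middle_informative (0 < pi x)) as [|n]; auto.
  specialize (Hnn x). lra.
Qed.

Lemma dist_pos {X : Type} (pi : X -> R) : is_dist pi -> exists x, 0 < pi x.
Proof.
  intros Hd. destruct (support_exists pi Hd) as [[|x L] HL].
  - pose proof (support_sum pi [] Hd HL) as H. simpl in H. lra.
  - exists x. apply HL. simpl; auto.
Qed.

Lemma proper_prefix_cons {T : Type} (x : T) c c' :
  proper_prefix (x :: c) c' <-> exists c'', c' = x :: c'' /\ proper_prefix c c''.
Proof.
  split.
  - intros [d [Hd ->]]. exists (c ++ d). split; [reflexivity | exists d; auto].
  - intros [c'' [-> [d [Hd ->]]]]. exists d. auto.
Qed.

Lemma erase_ctrace_cons {A Z : Type} (a : Atau A) (z : Z) c :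
  erase (ctrace ((a, z) :: c)) = erase [a] ++ erase (ctrace c).
Proof. destruct a; reflexivity. Qed.

Lemma erase_length {A : Type} (l : list (Atau A)) : (length (erase l) <= length l)%nat.
Proof. induction l as [|[a|] l IH]; simpl; lia. Qed.

Section Resolution.
Context {A Z : Type} (rtr : Z -> option (Atau A * (Z -> R))).
Hypothesis rtr_wf : PTS_wf (res_trans rtr).

Definition successor (z' z : Z) : Prop := exists a pi, rtr z = Some (a, pi) /\ 0 < pi z'.

Definition max_erased (z : Z) (al : list A) (c : list (Atau A * Z)) : Prop :=
  is_max_comp rtr z c /\ erase (ctrace c) = al.

Definition weak_pr (z : Z) (al : list A) : R := PrSet rtr z (Cw rtr z al).

Definition max_pr (z : Z) (al : list A) : R := PrSet rtr z (max_erased z al).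

Lemma transition_dist {z a pi} : rtr z = Some (a, pi) -> is_dist pi.
Proof. apply rtr_wf. Qed.

Lemma comp_pr_pos z c : is_comp rtr z c -> 0 < comp_pr rtr z c.
Proof.
  revert z. induction c as [|[a z'] c IH]; intros z Hc; simpl in *; [lra|].
  destruct Hc as [pi [E [Hp Hc]]]. rewrite E. specialize (IH _ Hc). nra.
Qed.

Lemma comps_covered z : Acc successor z -> covered (is_comp rtr z).
Proof.
  induction 1 as [z _ IH].
  destruct (rtr z) as [[a pi]|] eqn:E.
  - destruct (support_exists pi (transition_dist E)) as [L [_ HL]].
    destruct (covered_union_list L (fun z' c => exists c', c = (a, z') :: c' /\ is_comp rtr z' c'))
      as [l Hl].
    { intros z' Hz'. destruct (IH z') as [l' Hl']; [exists a, pi; rewrite <- HL; auto|].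
      exists (map (cons (a, z')) l'). intros c [c' [-> Hc']]. apply in_map; auto. }
    exists ([] :: l). intros [|[b z'] c] Hc; simpl; auto. right. apply Hl.
    destruct Hc as [pi' [E' [Hp Hc]]]. rewrite E in E'. injection E' as -> ->.
    exists z'. rewrite HL. eauto.
  - exists [[]]. intros [|[b z'] c] Hc; simpl; auto.
    destruct Hc as [pi' [E' _]]. congruence.
Qed.


Lemma PrSet_step z a pi L (P : list (Atau A * Z) -> Prop) (Pz : Z -> list (Atau A * Z) -> Prop) :
  Acc successor z -> rtr z = Some (a, pi) -> support pi L ->
  (forall z' c, Pz z' c -> is_comp rtr z' c) ->
  (forall c, P c <-> exists z' c', c = (a, z') :: c' /\ 0 < pi z' /\ Pz z' c') ->
  PrSet rtr z P = lsum (fun z' => pi z' * PrSet rtr z' (Pz z')) L.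
Proof.
  intros Hacc E [N HL] Hcomp HP. unfold PrSet.
  rewrite (fsum_ext P (fun c => exists z', In z' L /\ exists c', Pz z' c' /\ c = (a, z') :: c')
             _ (comp_pr rtr z)); [|intros c; rewrite HP | reflexivity].
  2:{ split.
      - intros (z' & c' & -> & Hp & Hc). exists z'. split; [apply HL, Hp | eauto].
      - intros (z' & Hz' & c' & Hc & ->). exists z', c'. repeat split; auto. apply HL, Hz'. }
  rewrite fsum_cons_union by
    (auto; intros z' Hz'; apply (covered_sub _ (is_comp rtr z')); auto;
     apply comps_covered, (Acc_inv Hacc); exists a, pi; rewrite <- HL; auto).
  apply lsum_ext. intros z' _. rewrite <- fsum_scal. apply fsum_ext; [tauto|].
  intros c _. simpl. rewrite E. reflexivity.
Qed.

Lemma Cw_cons z a0 pi be a z' c : rtr z = Some (a0, pi) ->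
  Cw rtr z (erase [a0] ++ be) ((a, z') :: c) <-> a = a0 /\ 0 < pi z' /\ Cw rtr z' be c.
Proof.
  intros E. unfold Cw. rewrite erase_ctrace_cons. split.
  - intros [[pi1 [E1 [Hp Hc]]] [He Hn]]. rewrite E in E1. injection E1 as <- <-.
    apply app_inv_head in He. repeat split; auto.
    intros [c2 [Hc2 [He2 Hpp]]]. apply Hn. exists ((a0, z') :: c2). repeat split.
    + exists pi. auto.
    + rewrite erase_ctrace_cons, He2. reflexivity.
    + apply proper_prefix_cons. eauto.
  - intros [-> [Hp [Hc [He Hn]]]]. split; [exists pi; auto|]. split; [rewrite He; reflexivity|].
    intros [c2 [Hc2 [He2 Hpp]]]. apply proper_prefix_cons in Hpp as [c2' [-> Hpp]].
    destruct Hc2 as [pi2 [_ [_ Hc2]]]. rewrite erase_ctrace_cons in He2.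
    apply app_inv_head in He2. apply Hn. eauto.
Qed.

Lemma is_max_comp_cons z a0 pi a z' c : rtr z = Some (a0, pi) ->
  is_max_comp rtr z ((a, z') :: c) <-> a = a0 /\ 0 < pi z' /\ is_max_comp rtr z' c.
Proof.
  intros E. split.
  - intros [[pi1 [E1 [Hp Hc]]] Hn]. rewrite E in E1. injection E1 as <- <-.
    repeat split; auto. intros [c2 [Hc2 Hpp]]. apply Hn. exists ((a0, z') :: c2). split.
    + exists pi. auto.
    + apply proper_prefix_cons. eauto.
  - intros [-> [Hp [Hc Hn]]]. split; [exists pi; auto|].
    intros [c2 [Hc2 Hpp]]. apply proper_prefix_cons in Hpp as [c2' [-> Hpp]].
    destruct Hc2 as [pi2 [_ [_ Hc2]]]. apply Hn. eauto.
Qed.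

Lemma max_erased_cons z a0 pi be a z' c : rtr z = Some (a0, pi) ->
  max_erased z (erase [a0] ++ be) ((a, z') :: c) <-> a = a0 /\ 0 < pi z' /\ max_erased z' be c.
Proof.
  intros E. unfold max_erased. rewrite (is_max_comp_cons z a0 pi) by exact E.
  rewrite erase_ctrace_cons. split.
  - intros [[-> [Hp Hc]] He]. apply app_inv_head in He. auto.
  - intros [-> [Hp [Hc He]]]. rewrite He. auto.
Qed.

(* A silent step can always be appended without changing the visible trace. *)
Lemma not_Cw_nil z a pi be : rtr z = Some (a, pi) -> ~ Cw rtr z (erase [a] ++ be) [].
Proof.
  intros E [_ [He Hn]]. destruct a as [b|]; [discriminate|].
  destruct (dist_pos pi (transition_dist E)) as [z' Hz'].
  apply Hn. exists [(None, z')]. repeat split.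
  - exists pi. simpl. auto.
  - exact He.
  - exists [(None, z')]. split; [congruence | reflexivity].
Qed.

Lemma not_is_max_comp_nil z a pi : rtr z = Some (a, pi) -> ~ is_max_comp rtr z [].
Proof.
  intros E [_ Hn]. destruct (dist_pos pi (transition_dist E)) as [z' Hz'].
  apply Hn. exists [(a, z')]. split.
  - exists pi. simpl. auto.
  - exists [(a, z')]. split; [congruence | reflexivity].
Qed.

Lemma comp_erase_cons z c b al : is_comp rtr z c -> erase (ctrace c) = b :: al ->
  exists a pi, rtr z = Some (a, pi) /\ (a = tau \/ a = Some b).
Proof.
  intros Hc He. destruct c as [|[a z'] c]; [discriminate|].
  destruct Hc as [pi [E _]]. exists a, pi. split; auto.
  destruct a as [b'|]; [right | left]; auto.
  simpl in He. injection He as ->. reflexivity.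
Qed.

Lemma weak_pr_step z a pi L al be : Acc successor z -> rtr z = Some (a, pi) -> support pi L ->
  al = erase [a] ++ be -> weak_pr z al = lsum (fun z' => pi z' * weak_pr z' be) L.
Proof.
  intros Hacc E HL ->. apply (PrSet_step z a pi L _ (fun z' => Cw rtr z' be)); auto.
  - intros z' c Hc. apply Hc.
  - intros [|[a1 z'] c].
    + split; [intros H; exfalso; eapply not_Cw_nil; eauto | intros (z' & c' & [=] & _)].
    + rewrite (Cw_cons z a pi) by exact E. split.
      * intros (-> & Hp & Hc). eauto.
      * intros (z'' & c' & [= -> -> ->] & Hp & Hc). auto.
Qed.

Lemma max_pr_step z a pi L al be : Acc successor z -> rtr z = Some (a, pi) -> support pi L ->
  al = erase [a] ++ be -> max_pr z al = lsum (fun z' => pi z' * max_pr z' be) L.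
Proof.
  intros Hacc E HL ->. apply (PrSet_step z a pi L _ (fun z' => max_erased z' be)); auto.
  - intros z' c Hc. apply Hc.
  - intros [|[a1 z'] c].
    + split; [intros H; exfalso; eapply not_is_max_comp_nil, H; eauto | intros (z' & c' & [=] & _)].
    + rewrite (max_erased_cons z a pi) by exact E. split.
      * intros (-> & Hp & Hc). eauto.
      * intros (z'' & c' & [= -> -> ->] & Hp & Hc). auto.
Qed.

Definition enables (z : Z) (b : A) : Prop :=
  exists a pi, rtr z = Some (a, pi) /\ (a = tau \/ a = Some b).

Lemma not_enables_final z b : rtr z = None -> ~ enables z b.
Proof. intros E (a & pi & E' & _). congruence. Qed.

Lemma not_enables_visible z b pi b' : rtr z = Some (Some b, pi) -> b' <> b -> ~ enables z b'.
Proof.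
  intros E Hne (a & pi' & E' & Ha). rewrite E in E'. injection E' as <- _.
  destruct Ha as [Ha|Ha]; [discriminate Ha | congruence].
Qed.

Lemma weak_pr_cons_disabled z b al : ~ enables z b -> weak_pr z (b :: al) = 0.
Proof. intros H. apply fsum_empty. intros c [Hc [He _]]. eapply H, comp_erase_cons; eauto. Qed.

Lemma max_pr_cons_disabled z b al : ~ enables z b -> max_pr z (b :: al) = 0.
Proof. intros H. apply fsum_empty. intros c [[Hc _] He]. eapply H, comp_erase_cons; eauto. Qed.

Lemma weak_pr_nil_no_tau z : (forall pi, rtr z <> Some (tau, pi)) -> weak_pr z [] = 1.
Proof.
  intros Hstop.
  assert (Hnil : forall c, is_comp rtr z c -> erase (ctrace c) = [] -> c = []).
  { intros [|[[b|] z'] c] Hc He; [reflexivity | discriminate |].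
    destruct Hc as [pi [E _]]. exfalso. eapply Hstop, E. }
  unfold weak_pr, PrSet. rewrite (fsum_single _ _ []); [reflexivity|].
  intros c. split; [intros [Hc [He _]]; auto|].
  intros ->. repeat split.
  intros [c' [Hc' [He' [d [Hd ->]]]]]. exact (Hd (Hnil _ Hc' He')).
Qed.

Lemma max_pr_nil_final z : rtr z = None -> max_pr z [] = 1.
Proof.
  intros E.
  assert (Hnil : forall c, is_comp rtr z c -> c = []).
  { intros [|[a z'] c] Hc; [reflexivity|]. destruct Hc as [pi [E' _]]. congruence. }
  unfold max_pr, PrSet. rewrite (fsum_single _ _ []); [reflexivity|].
  intros c. split; [intros [[Hc _] _]; auto|].
  intros ->. repeat split.
  intros [c' [Hc' [d [Hd ->]]]]. exact (Hd (Hnil _ Hc')).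
Qed.

Lemma max_pr_nil_visible z b pi : rtr z = Some (Some b, pi) -> max_pr z [] = 0.
Proof.
  intros E. apply fsum_empty. intros [|[a z'] c] [Hc He].
  - eapply not_is_max_comp_nil; eauto.
  - apply (is_max_comp_cons z (Some b) pi) in Hc as [-> _]; [discriminate | exact E].
Qed.

Lemma weak_pr_nil z : Acc successor z -> weak_pr z [] = 1.
Proof.
  induction 1 as [z Hacc IH].
  destruct (rtr z) as [[[b|] pi]|] eqn:E;
    try (apply weak_pr_nil_no_tau; intros pi' E'; rewrite E' in E; discriminate).
  destruct (support_exists pi (transition_dist E)) as [L HL].
  rewrite (weak_pr_step z None pi L [] []) by (auto || (constructor; auto)).
  rewrite <- (support_sum pi L (transition_dist E) HL). apply lsum_ext. intros z' Hz'.
  rewrite IH; [lra|]. exists tau, pi. split; [auto | apply HL, Hz'].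
Qed.

Lemma weak_pr_vanishes z : Acc successor z ->
  exists B, forall al, (B < length al)%nat -> weak_pr z al = 0.
Proof.
  intros Hacc. destruct (comps_covered z Hacc) as [l Hl].
  exists (list_max (map (@length _) l)). intros al Hlen. apply fsum_empty.
  intros c [Hc [<- _]].
  pose proof (proj1 (list_max_le (map (@length _) l) _) (le_n _)) as Hmax.
  rewrite Forall_forall in Hmax. specialize (Hmax _ (in_map _ _ _ (Hl c Hc))).
  pose proof (erase_length (ctrace c)). unfold ctrace in *. rewrite length_map in *. lia.
Qed.

Definition visible_actions_in (LA : list A) (z : Z) : Prop :=
  forall c, is_comp rtr z c -> incl (erase (ctrace c)) LA.

Lemma visible_actions_in_successor LA z a pi z' :
  visible_actions_in LA z -> rtr z = Some (a, pi) -> 0 < pi z' -> visible_actions_in LA z'.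
Proof.
  intros H E Hp c Hc. apply incl_tran with (erase (ctrace ((a, z') :: c))).
  - rewrite erase_ctrace_cons. apply incl_appr, incl_refl.
  - apply H. exists pi. auto.
Qed.

Lemma visible_actions_in_enabled LA z b pi :
  visible_actions_in LA z -> rtr z = Some (Some b, pi) -> In b LA.
Proof.
  intros H E. destruct (dist_pos pi (transition_dist E)) as [z' Hz'].
  apply (H [(Some b, z')]); [exists pi; simpl; auto | left; reflexivity].
Qed.

Lemma visible_actions_in_exists z : Acc successor z -> exists LA, visible_actions_in LA z.
Proof.
  intros Hacc. destruct (comps_covered z Hacc) as [l Hl].
  exists (flat_map (fun c => erase (ctrace c)) l). intros c Hc b Hb.
  apply in_flat_map. eauto.
Qed.

Section ExtensionIdentity.
Variable LA : list A.
Hypothesis LA_NoDup : NoDup LA.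

Definition extension_identity (z : Z) : Prop :=
  forall al, weak_pr z al = max_pr z al + lsum (fun b => weak_pr z (al ++ [b])) LA.

Lemma extension_identity_disabled z b al :
  ~ enables z b ->
  weak_pr z (b :: al) = max_pr z (b :: al) + lsum (fun b' => weak_pr z ((b :: al) ++ [b'])) LA.
Proof.
  intros Hdis. rewrite weak_pr_cons_disabled, max_pr_cons_disabled by exact Hdis.
  rewrite (lsum_ext _ (fun _ => 0)) by (intros b' _; apply weak_pr_cons_disabled, Hdis).
  rewrite lsum_zero. lra.
Qed.

Lemma extension_identity_final z : rtr z = None -> extension_identity z.
Proof.
  intros E [|b al]; [|apply extension_identity_disabled, not_enables_final, E].
  rewrite weak_pr_nil_no_tau, max_pr_nil_final by (auto; intros pi E'; congruence).
  rewrite (lsum_ext _ (fun _ => 0))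
    by (intros b _; apply weak_pr_cons_disabled, not_enables_final, E).
  rewrite lsum_zero. lra.
Qed.

Lemma extension_identity_visible_nil z b pi L :
  Acc successor z -> rtr z = Some (Some b, pi) -> support pi L -> visible_actions_in LA z ->
  weak_pr z [] = max_pr z [] + lsum (fun b' => weak_pr z ([] ++ [b'])) LA.
Proof.
  intros Hacc E HL Hvis.
  rewrite weak_pr_nil_no_tau, (max_pr_nil_visible z b pi E)
    by (intros pi' E'; rewrite E' in E; discriminate).
  rewrite (lsum_ext _ (fun b' => if excluded_middle_informative (b = b') then 1 else 0)).
  - rewrite lsum_delta by exact LA_NoDup.
    destruct (excluded_middle_informative (In b LA)) as [|Hb]; [lra|].
    exfalso. eapply Hb, visible_actions_in_enabled; eauto.
  - intros b' _. simpl. destruct (excluded_middle_informative (b = b')) as [<-|Hne].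
    + rewrite (weak_pr_step z (Some b) pi L [b] []) by auto.
      rewrite <- (support_sum pi L (transition_dist E) HL). apply lsum_ext. intros z' Hz'.
      rewrite weak_pr_nil; [lra|].
      apply (Acc_inv Hacc). exists (Some b), pi. split; [auto | apply HL, Hz'].
    + apply weak_pr_cons_disabled, (not_enables_visible z b pi); congruence.
Qed.

Lemma extension_identity_step z a pi L be :
  Acc successor z -> rtr z = Some (a, pi) -> support pi L ->
  (forall z', In z' L -> extension_identity z') ->
  weak_pr z (erase [a] ++ be) =
    max_pr z (erase [a] ++ be) + lsum (fun b => weak_pr z ((erase [a] ++ be) ++ [b])) LA.
Proof.
  intros Hacc E HL IH.
  rewrite (weak_pr_step z a pi L _ be), (max_pr_step z a pi L _ be) by auto.
  rewrite (lsum_ext _ (fun b => lsum (fun z' => pi z' * weak_pr z' (be ++ [b])) L))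
    by (intros b _; apply (weak_pr_step z a pi L); auto; symmetry; apply app_assoc).
  rewrite <- (lsum_exch (fun z' b => pi z' * weak_pr z' (be ++ [b]))), <- lsum_plus.
  apply lsum_ext. intros z' Hz'. rewrite (IH z' Hz'), lsum_scal. lra.
Qed.

Lemma weak_pr_extension z : Acc successor z -> visible_actions_in LA z -> extension_identity z.
Proof.
  induction 1 as [z Hacc IH]. intros Hvis.
  assert (Hz : Acc successor z) by (constructor; exact Hacc).
  destruct (rtr z) as [[a pi]|] eqn:E; [|exact (extension_identity_final z E)].
  destruct (support_exists pi (transition_dist E)) as [L HL].
  assert (IHL : forall z', In z' L -> extension_identity z').
  { intros z' Hz'. apply HL in Hz'.
    apply IH; [exists a, pi; auto | eapply visible_actions_in_successor; eauto]. }
  intros al. destruct a as [b|]; [|exact (extension_identity_step z None pi L al Hz E HL IHL)].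
  destruct al as [|b' be]; [eapply extension_identity_visible_nil; eauto|].
  destruct (classic (b' = b)) as [->|Hne].
  - exact (extension_identity_step z (Some b) pi L be Hz E HL IHL).
  - exact (extension_identity_disabled z b' be (not_enables_visible z b pi b' E Hne)).
Qed.

End ExtensionIdentity.

End Resolution.

Lemma not_Acc_descending_chain {X : Type} (Rel : X -> X -> Prop) x :
  ~ Acc Rel x -> exists f : nat -> X, f O = x /\ forall n, Rel (f (Datatypes.S n)) (f n).
Proof.
  intros Hx.
  assert (Hnext : forall y : {y | ~ Acc Rel y}, exists y' : {y | ~ Acc Rel y},
             Rel (proj1_sig y') (proj1_sig y)).
  { intros [y Hy]. apply NNPP. intros H. apply Hy. constructor. intros y' Hy'.
    apply NNPP. intros Hy''. apply H. exists (exist _ y' Hy''). exact Hy'. }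
  set (next := fun y => proj1_sig (constructive_indefinite_description _ (Hnext y))).
  set (chain := fix chain n :=
         match n with O => exist _ x Hx | Datatypes.S n => next (chain n) end).
  exists (fun n => proj1_sig (chain n)). split; [reflexivity|].
  intros n. simpl. unfold next. destruct constructive_indefinite_description as [y' Hy']. exact Hy'.
Qed.

Lemma resolution_Acc {A S Z : Type} (trans : S -> Atau A -> (S -> R) -> Prop) s
  (rtr : Z -> option (Atau A * (Z -> R))) corr z0 :
  is_resolution trans s rtr corr z0 -> finite_proc trans s -> Acc (successor rtr) z0.
Proof.
  intros (_ & Hz0 & _ & _ & Hmatch) Hfin. apply NNPP. intros Hn.
  destruct (not_Acc_descending_chain _ _ Hn) as [f [Hf0 Hf]].
  assert (Hstep : forall n, exists p : Atau A * (S -> R),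
    trans (corr (f n)) (fst p) (snd p) /\ 0 < snd p (corr (f (Datatypes.S n)))).
  { intros n. destruct (Hf n) as [a [pi [E Hpos]]]. destruct (Hmatch _ _ _ E) as [pi' [Ht Heq]].
    exists (a, pi'). simpl. rewrite <- Heq. auto. }
  set (p := fun n => proj1_sig (constructive_indefinite_description _ (Hstep n))).
  apply Hfin. exists (fun n => corr (f n)), (fun n => fst (p n)), (fun n => snd (p n)).
  split; [rewrite Hf0; exact Hz0|]. intros n. unfold p.
  destruct constructive_indefinite_description as [q Hq]. exact Hq.
Qed.

Fixpoint formula_trace {A : Type} (f : tform A) : list (Atau A) :=
  match f with TTop => [] | TDia a f' => a :: formula_trace f' end.

Lemma tracing_formula_trace {A : Type} (f : tform A) : tracing (formula_trace f) = f.
Proof. induction f; simpl; congruence. Qed.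

Lemma formula_trace_tracing {A : Type} (l : list (Atau A)) : formula_trace (tracing l) = l.
Proof. induction l; simpl; congruence. Qed.

Lemma tf_equiv_erase {A : Type} (g f : tform A) :
  tf_equiv g f <-> erase (formula_trace g) = erase (formula_trace f).
Proof.
  split.
  - intros [al [be [-> [-> H]]]]. rewrite !formula_trace_tracing. exact H.
  - intros H. exists (formula_trace g), (formula_trace f). rewrite !tracing_formula_trace. auto.
Qed.

Lemma erase_map_Some {A : Type} (l : list A) : erase (map Some l) = l.
Proof. induction l; simpl; congruence. Qed.

Lemma class_pr_mimic {A Z : Type} (rtr : Z -> option (Atau A * (Z -> R))) z f :
  PTS_wf (res_trans rtr) -> Acc (successor rtr) z ->
  class_pr (mimic rtr z) f = max_pr rtr z (erase (formula_trace f)).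
Proof.
  intros Hwf Hacc. unfold class_pr.
  assert (cM : covered (is_max_comp rtr z)).
  { apply (covered_sub _ (is_comp rtr z)); [exact (comps_covered rtr Hwf z Hacc)|].
    intros c [H _]. exact H. }
  unfold mimic at 2, PrSet. rewrite fsum_partition; auto.
  - unfold max_pr, PrSet, max_erased. apply fsum_ext; [|reflexivity].
    intros c. rewrite tf_equiv_erase, formula_trace_tracing. split; [tauto|].
    intros [Hc He]. split; [exact Hc|]. split; [exact He|].
    assert (0 < comp_pr rtr z c) by apply comp_pr_pos, (proj1 Hc).
    assert (comp_pr rtr z c <= mimic rtr z (tracing (ctrace c))); [|lra].
    apply fsum_ge; [ | intros x [[Hx _] _]; left; apply comp_pr_pos, Hx | split; auto].
    apply (covered_sub _ _ cM). intros x [Hx _]; exact Hx.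
  - destruct cM as [lM HM]. exists (map (fun c => tracing (ctrace c)) lM).
    intros g [_ Hg]. apply NNPP. intros Hn. apply Hg. apply fsum_empty.
    intros c [Hc <-]. apply Hn, (in_map (fun c => tracing (ctrace c))), HM, Hc.
Qed.

Lemma tdf_equiv_mimic {A Z1 Z2 : Type} (rtr1 : Z1 -> option (Atau A * (Z1 -> R)))
  (rtr2 : Z2 -> option (Atau A * (Z2 -> R))) z1 z2 :
  PTS_wf (res_trans rtr1) -> PTS_wf (res_trans rtr2) ->
  Acc (successor rtr1) z1 -> Acc (successor rtr2) z2 ->
  tdf_equiv (mimic rtr1 z1) (mimic rtr2 z2) <-> forall al, max_pr rtr1 z1 al = max_pr rtr2 z2 al.
Proof.
  intros W1 W2 H1 H2. unfold tdf_equiv. split.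
  - intros H al. specialize (H (tracing (map Some al))).
    rewrite !class_pr_mimic, formula_trace_tracing, erase_map_Some in H by assumption. exact H.
  - intros H f. rewrite !class_pr_mimic by assumption. apply H.
Qed.

Lemma eq_iff_of_extension_identity {A : Type} (LA : list A) (W1 W2 Q1 Q2 : list A -> R) B1 B2 :
  (forall al, W1 al = Q1 al + lsum (fun b => W1 (al ++ [b])) LA) ->
  (forall al, W2 al = Q2 al + lsum (fun b => W2 (al ++ [b])) LA) ->
  (forall al, (B1 < length al)%nat -> W1 al = 0) ->
  (forall al, (B2 < length al)%nat -> W2 al = 0) ->
  (forall al, Q1 al = Q2 al) <-> (forall al, W1 al = W2 al).
Proof.
  intros I1 I2 V1 V2. split.
  - intros HQ.
    assert (K : forall n al, (Datatypes.S (B1 + B2) <= length al + n)%nat -> W1 al = W2 al).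
    { induction n as [|n IHn]; intros al Hl.
      - rewrite V1, V2 by lia. reflexivity.
      - rewrite I1, I2, HQ. f_equal. apply lsum_ext. intros b _. apply IHn.
        rewrite length_app. simpl. lia. }
    intros al. apply (K (Datatypes.S (B1 + B2))). lia.
  - intros HW al. specialize (I1 al). specialize (I2 al).
    rewrite (lsum_ext _ (fun b => W2 (al ++ [b]))) in I1 by auto.
    rewrite HW in I1. lra.
Qed.

Lemma visible_actions_in_common {A Z1 Z2 : Type} (rtr1 : Z1 -> option (Atau A * (Z1 -> R)))
  (rtr2 : Z2 -> option (Atau A * (Z2 -> R))) z1 z2 :
  PTS_wf (res_trans rtr1) -> PTS_wf (res_trans rtr2) ->
  Acc (successor rtr1) z1 -> Acc (successor rtr2) z2 ->
  exists LA, NoDup LA /\ visible_actions_in rtr1 LA z1 /\ visible_actions_in rtr2 LA z2.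
Proof.
  intros W1 W2 H1 H2.
  destruct (visible_actions_in_exists rtr1 W1 z1 H1) as [L1 G1],
    (visible_actions_in_exists rtr2 W2 z2 H2) as [L2 G2].
  destruct (covered_NoDup (fun b => In b (L1 ++ L2))) as [LA [NA HA]]; [exists (L1 ++ L2); auto|].
  exists LA. split; [exact NA|].
  split; intros c Hc b Hb; apply HA, in_or_app; [left; eapply G1 | right; eapply G2]; eauto.
Qed.

Theorem theorem12 (A S : Type) (trans : S -> Atau A -> (S -> R) -> Prop)
  (Hwf : PTS_wf trans) (s t : S)
  (Hs_if : image_finite_proc trans s) (Hs_fin : finite_proc trans s)
  (Ht_if : image_finite_proc trans t) (Ht_fin : finite_proc trans t)
  (Zs : Type) (rtr_s : Zs -> option (Atau A * (Zs -> R))) (corr_s : Zs -> S) (zs : Zs)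
  (Hres_s : is_resolution trans s rtr_s corr_s zs)
  (Zt : Type) (rtr_t : Zt -> option (Atau A * (Zt -> R))) (corr_t : Zt -> S) (zt : Zt)
  (Hres_t : is_resolution trans t rtr_t corr_t zt) :
  tdf_equiv (mimic rtr_s zs) (mimic rtr_t zt) <->
  (forall alpha : list A, PrSet rtr_s zs (Cw rtr_s zs alpha) = PrSet rtr_t zt (Cw rtr_t zt alpha)).
Proof.
  pose proof (resolution_Acc trans s rtr_s corr_s zs Hres_s Hs_fin) as Acc_s.
  pose proof (resolution_Acc trans t rtr_t corr_t zt Hres_t Ht_fin) as Acc_t.
  destruct Hres_s as [wf_s _], Hres_t as [wf_t _].
  destruct (visible_actions_in_common rtr_s rtr_t zs zt wf_s wf_t Acc_s Acc_t)
    as [LA [NA [Vis_s Vis_t]]].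
  destruct (weak_pr_vanishes rtr_s wf_s zs Acc_s) as [Bs Van_s].
  destruct (weak_pr_vanishes rtr_t wf_t zt Acc_t) as [Bt Van_t].
  rewrite (tdf_equiv_mimic rtr_s rtr_t zs zt wf_s wf_t Acc_s Acc_t).
  exact (eq_iff_of_extension_identity LA _ _ _ _ Bs Bt
           (weak_pr_extension rtr_s wf_s LA NA zs Acc_s Vis_s)
           (weak_pr_extension rtr_t wf_t LA NA zt Acc_t Vis_t) Van_s Van_t).
Qed.
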